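(* In the setting of one non-elite offspring of the GA with proportional selection, uniform crossover and uniform mutation with rate $\pi_m\in(0,1/2]$, for every schema $H$, $$\alpha(H,t)\ge(1-\pi_m)^{\mathrm{ord}(H)}\alpha_{sel}(H,t)^2+2^{-\mathrm{ord}(H)}\alpha_{sel}(H,t)\big[1-\alpha_{sel}(H,t)\big]+\big[1-\alpha_{sel}(H,t)\big]^2\pi_m^{\mathrm{ord}(H)}.$$
   Context: Current population $\Psi(t)=(u^1,\dots,u^K)$, a list of $K$ elements of $\{0,1\}^d$, with fitness $f$. One offspring is generated by: drawing two parent indices $k,l$ independently, each equal to $j$ with probability $w_j=\exp(f(u^j)/2)/\sum_{i=1}^K\exp(f(u^i)/2)$; forming a child $c$ with $c_j=u^k_j$ or $u^l_j$ with probability $1/2$ each, independently over $j$; flipping each coordinate of $c$ independently with probability $\pi_m$. A schema is $H\in\{0,1,*\}^d$; fixed positions are those $j$ with $H_j\neq*$, $\mathrm{ord}(H)$ is their number; $u$ matches $H$ if $u_j=H_j$ at all fixed positions; ${\uparrow}(H)$ is the set of models matching $H$. $\alpha(H,t)$ is the probability that the offspring matches $H$, and $\alpha_{sel}(H,t)=\sum_{k:u^k\in{\uparrow}(H)}w_k$. *)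

From Stdlib Require Import Reals List.
Import ListNotations.
Open Scope R_scope.

(* A model is a bit string (list bool) of length d; a schema is a list of
   option bool of length d, where None stands for the wildcard '*'. *)
Definition model := list bool.
Definition schema := list (option bool).

Definition sumR (l : list R) : R := fold_right Rplus 0 l.

Fixpoint all_bits (d : nat) : list (list bool) :=
  match d with
  | O => [[]]
  | S d' => map (cons false) (all_bits d') ++ map (cons true) (all_bits d')
  end.

Fixpoint matchesb (H : schema) (u : model) : bool :=
  match H, u with
  | [], [] => true
  | h :: H', b :: u' =>
      andb (match h with None => true | Some c => Bool.eqb b c end) (matchesb H' u')
  | _, _ => false
  end.

Definition ord (H : schema) : nat :=
  length (filter (fun h => match h with Some _ => true | None => false end) H).

Fixpoint crossover (m a b : list bool) : model :=
  match m, a, b with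
  | mj :: m', aj :: a', bj :: b' => (if mj then aj else bj) :: crossover m' a' b'
  | _, _, _ => []
  end.

Fixpoint mutate (z c : list bool) : model :=
  match z, c with
  | zj :: z', cj :: c' => xorb zj cj :: mutate z' c'
  | _, _ => []
  end.

Definition count_true (z : list bool) : nat := length (filter (fun b => b) z).
Definition count_false (z : list bool) : nat := length (filter negb z).

Definition mut_prob (pm : R) (z : list bool) : R :=
  pm ^ count_true z * (1 - pm) ^ count_false z.

Definition sel_weight (f : model -> R) (pop : list model) (j : nat) : R :=
  exp (f (nth j pop []) / 2) /
  sumR (map (fun i => exp (f (nth i pop []) / 2)) (seq 0 (length pop))).

Definition alpha_sel (f : model -> R) (pop : list model) (H : schema) : R :=
  sumR (map (fun k => if matchesb H (nth k pop []) then sel_weight f pop k else 0)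
            (seq 0 (length pop))).

Definition indicator (b : bool) : R := if b then 1 else 0.

(* alpha(H,t): probability that the offspring matches H, written as the sum over
   all outcomes (parents k,l; crossover mask m, uniform over {0,1}^d; flip mask z)
   of the outcome probability times the indicator of matching H. *)
Definition alpha (d : nat) (pm : R) (f : model -> R) (pop : list model) (H : schema) : R :=
  sumR (map (fun k =>
  sumR (map (fun l =>
  sumR (map (fun m =>
  sumR (map (fun z =>
     sel_weight f pop k * sel_weight f pop l * (/ 2) ^ d * mut_prob pm z *
     indicator (matchesb H (mutate z (crossover m (nth k pop []) (nth l pop [])))))
  (all_bits d)))
  (all_bits d)))
  (seq 0 (length pop))))
  (seq 0 (length pop))).

From Stdlib Require Import Reals List Bool Lra Lia.
Import ListNotations.
Open Scope R_scope.

(* Fix two parents u and v.  Summing the outcome probabilities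
   over all crossover masks and flip masks, the probability that the child
   of u and v matches H factorizes over the coordinates, because both masks
   are uniform product measures: a wildcard coordinate contributes 1 and a
   fixed coordinate contributes the average, over the two parental bits, of
   the probability that the bit survives mutation as required.  That factor
   is at least 1-pm if both parents fit the coordinate, 1/2 if the first one
   does, and pm in any case (this is where pm <= 1/2 is used).  Hence the
   "transmission probability" T(u,v) is at least (1-pm)^ord, (1/2)^ord or
   pm^ord respectively.  Finally alpha is the double average of T(u^k,u^l)
   under the selection weights, and averaging the case bound, which is
   affine in the indicators of u^k and u^l matching H, gives
   (1-pm)^ord a^2 + (1/2)^ord a(1-a) + pm^ord (1-a) with a = alpha_sel;
   the last term dominates pm^ord (1-a)^2 since 0 <= a <= 1.
   The file develops, in order: finite sums, weighted means, proportional
   selection, the coordinatewise factorization of T and its bounds, the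
   expression of alpha as a double mean, and finally the corollary. *)

Lemma sumR_app (l1 l2 : list R) : sumR (l1 ++ l2) = sumR l1 + sumR l2.
Proof. induction l1 as [|x l1 IH]; simpl; [ring | rewrite IH; ring]. Qed.

Lemma sumR_map_scale {A : Type} (l : list A) (f g : A -> R) (c : R) :
  (forall x, f x = c * g x) -> sumR (map f l) = c * sumR (map g l).
Proof. intros E; induction l as [|x l IH]; simpl; [ring | rewrite IH, E; ring]. Qed.

Lemma sumR_map_lin {A : Type} (l : list A) (f g h : A -> R) (c1 c2 : R) :
  (forall x, f x = c1 * g x + c2 * h x) ->
  sumR (map f l) = c1 * sumR (map g l) + c2 * sumR (map h l).
Proof. intros E; induction l as [|x l IH]; simpl; [ring | rewrite IH, E; ring]. Qed.

Lemma sumR_map_le {A : Type} (l : list A) (f g : A -> R) :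
  (forall x, In x l -> f x <= g x) -> sumR (map f l) <= sumR (map g l).
Proof.
  intros E; induction l as [|x l IH]; simpl; [lra|].
  assert (f x <= g x) by (apply E; left; reflexivity).
  assert (sumR (map f l) <= sumR (map g l)) by (apply IH; intros; apply E; right; assumption).
  lra.
Qed.

Lemma sumR_map_pos {A : Type} (l : list A) (f : A -> R) :
  (forall x, 0 < f x) -> l <> [] -> 0 < sumR (map f l).
Proof.
  intros E Hl; induction l as [|x [|y l] IH]; simpl in *; [congruence | |].
  - specialize (E x); lra.
  - assert (0 < sumR (map f (y :: l))) by (apply IH; discriminate).
    specialize (E x); simpl in *; lra.
Qed.

(* Weighted averages over an index list whose weights form a probability
   vector; both alpha_sel and alpha are such averages. *)
Section WeightedMean.

Context {A : Type} (idx : list A) (w : A -> R).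

Definition mean (g : A -> R) : R := sumR (map (fun k => w k * g k) idx).

Hypothesis w_nonneg : forall k, 0 <= w k.
Hypothesis w_total : sumR (map w idx) = 1.

Lemma mean_affine (g g' : A -> R) (c1 c2 : R) :
  (forall k, g' k = c1 * g k + c2) -> mean g' = c1 * mean g + c2.
Proof.
  intros E; unfold mean.
  rewrite (sumR_map_lin idx _ (fun k => w k * g k) w c1 c2), w_total by (intros k; rewrite E; ring).
  ring.
Qed.

Lemma mean_le (g h : A -> R) : (forall k, In k idx -> g k <= h k) -> mean g <= mean h.
Proof.
  intros E; apply sumR_map_le; intros k Hk.
  apply Rmult_le_compat_l; [apply w_nonneg | apply E, Hk].
Qed.

Lemma mean_unit_interval (g : A -> R) :
  (forall k, 0 <= g k <= 1) -> 0 <= mean g <= 1.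
Proof.
  intros E.
  assert (Hc : forall c, mean (fun _ => c) = c).
  { intros c; rewrite (mean_affine g (fun _ => c) 0 c) by (intros; ring); ring. }
  split; [rewrite <- (Hc 0) | rewrite <- (Hc 1)]; apply mean_le; intros k _; apply E.
Qed.

Lemma mean_case_bound (i : A -> R) (P1 P2 P3 : R) :
  mean (fun k => mean (fun l =>
          i k * i l * P1 + i k * (1 - i l) * P2 + (1 - i k) * P3))
  = P1 * mean i ^ 2 + P2 * mean i * (1 - mean i) + P3 * (1 - mean i).
Proof.
  set (a := mean i).
  rewrite (mean_affine i _ ((P1 - P2) * a + P2 - P3) P3).
  - unfold a; ring.
  - intros k; rewrite (mean_affine i _ (i k * (P1 - P2)) (i k * P2 + (1 - i k) * P3))
      by (intros; ring).
    fold a; ring.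
Qed.

End WeightedMean.

Lemma sel_weight_nonneg (f : model -> R) (pop : list model) (k : nat) :
  (1 <= length pop)%nat -> 0 <= sel_weight f pop k.
Proof.
  intros Hn; unfold sel_weight.
  apply Rlt_le, Rdiv_lt_0_compat; [apply exp_pos|].
  apply sumR_map_pos; [intros; apply exp_pos|].
  destruct pop; simpl in *; [lia | discriminate].
Qed.

Lemma sel_weight_total (f : model -> R) (pop : list model) :
  (1 <= length pop)%nat ->
  sumR (map (sel_weight f pop) (seq 0 (length pop))) = 1.
Proof.
  intros Hn.
  set (D := sumR (map (fun i => exp (f (nth i pop []) / 2)) (seq 0 (length pop)))).
  assert (HD : 0 < D).
  { apply sumR_map_pos; [intros; apply exp_pos|].
    destruct pop; simpl in *; [lia | discriminate]. }
  rewrite (sumR_map_scale _ _ (fun i => exp (f (nth i pop []) / 2)) (/ D)).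
  - fold D; field; lra.
  - intros k; unfold sel_weight; fold D; unfold Rdiv; ring.
Qed.

Lemma alpha_sel_mean (f : model -> R) (pop : list model) (H : schema) :
  alpha_sel f pop H =
  mean (seq 0 (length pop)) (sel_weight f pop)
       (fun k => indicator (matchesb H (nth k pop []))).
Proof.
  unfold alpha_sel, mean; f_equal; apply map_ext; intros k.
  unfold indicator; destruct (matchesb H (nth k pop [])); ring.
Qed.

Lemma alpha_sel_unit_interval (f : model -> R) (pop : list model) (H : schema) :
  (1 <= length pop)%nat -> 0 <= alpha_sel f pop H <= 1.
Proof.
  intros Hn; rewrite alpha_sel_mean; apply mean_unit_interval.
  - intros k; apply sel_weight_nonneg, Hn.
  - apply sel_weight_total, Hn.
  - intros k; unfold indicator; destruct (matchesb H (nth k pop [])); lra.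
Qed.

Definition fits (h : option bool) (b : bool) : bool :=
  match h with None => true | Some c => Bool.eqb b c end.

Definition bit_survival (pm : R) (h : option bool) (b : bool) : R :=
  (1 - pm) * indicator (fits h b) + pm * indicator (fits h (negb b)).

Lemma matchesb_cons (h : option bool) (H : schema) (b : bool) (u : model) :
  matchesb (h :: H) (b :: u) = fits h b && matchesb H u.
Proof. reflexivity. Qed.

Lemma indicator_andb (a b : bool) : indicator (a && b) = indicator a * indicator b.
Proof. destruct a, b; unfold indicator; simpl; ring. Qed.

Lemma mut_prob_cons (pm : R) (zj : bool) (z : list bool) :
  mut_prob pm (zj :: z) = (if zj then pm else 1 - pm) * mut_prob pm z.
Proof. unfold mut_prob, count_true, count_false; destruct zj; simpl; ring. Qed.

Definition mutation_match (pm : R) (H : schema) (c : model) : R :=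
  sumR (map (fun z => mut_prob pm z * indicator (matchesb H (mutate z c)))
            (all_bits (length H))).

Lemma mutation_match_cons (pm : R) (h : option bool) (H : schema) (b : bool) (c : model) :
  mutation_match pm (h :: H) (b :: c) = bit_survival pm h b * mutation_match pm H c.
Proof.
  unfold mutation_match, bit_survival; cbn [length all_bits].
  rewrite map_app, sumR_app, !map_map.
  set (g := fun z => mut_prob pm z * indicator (matchesb H (mutate z c))).
  assert (Hflip : forall zj : bool,
    sumR (map (fun z => mut_prob pm (zj :: z) *
                 indicator (matchesb (h :: H) (mutate (zj :: z) (b :: c))))
              (all_bits (length H)))
    = (if zj then pm else 1 - pm) * indicator (fits h (xorb zj b)) * sumR (map g (all_bits (length H)))).
  { intros zj; apply sumR_map_scale; intros z; unfold g.
    rewrite mut_prob_cons; cbn [mutate]; rewrite matchesb_cons, indicator_andb; ring. }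
  rewrite !Hflip; change (xorb false b) with b; change (xorb true b) with (negb b); ring.
Qed.

Definition transmission (pm : R) (H : schema) (u v : model) : R :=
  (/ 2) ^ length H *
  sumR (map (fun m => mutation_match pm H (crossover m u v)) (all_bits (length H))).

Definition coord_transmission (pm : R) (h : option bool) (x y : bool) : R :=
  / 2 * (bit_survival pm h x + bit_survival pm h y).

Lemma transmission_nil (pm : R) (u v : model) : transmission pm [] u v = 1.
Proof. unfold transmission, mutation_match, mut_prob, indicator; simpl; ring. Qed.

Lemma transmission_cons (pm : R) (h : option bool) (H : schema) (x y : bool) (u v : model) :
  transmission pm (h :: H) (x :: u) (y :: v) =
  coord_transmission pm h x y * transmission pm H u v.
Proof.
  unfold transmission, coord_transmission; cbn [length all_bits].
  rewrite map_app, sumR_app, !map_map; cbn [crossover].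
  rewrite !(sumR_map_scale _ (fun m => mutation_match pm (h :: H) (_ :: crossover m u v))
              (fun m => mutation_match pm H (crossover m u v)) _ (fun m => mutation_match_cons _ _ _ _ _)).
  simpl; ring.
Qed.

Lemma coord_transmission_wildcard (pm : R) (x y : bool) : coord_transmission pm None x y = 1.
Proof. unfold coord_transmission, bit_survival, indicator; simpl; field. Qed.

Lemma coord_transmission_fixed (pm : R) (t x y : bool) : 0 < pm <= / 2 ->
  pm <= coord_transmission pm (Some t) x y /\
  (fits (Some t) x = true -> / 2 <= coord_transmission pm (Some t) x y) /\
  (fits (Some t) x = true -> fits (Some t) y = true ->
     1 - pm <= coord_transmission pm (Some t) x y).
Proof.
  intros Hp; unfold coord_transmission, bit_survival, fits, indicator.
  destruct t, x, y; simpl; repeat split; intros; try discriminate; lra.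
Qed.

Lemma ord_cons_fixed (t : bool) (H : schema) : ord (Some t :: H) = S (ord H).
Proof. reflexivity. Qed.

Lemma ord_cons_wildcard (H : schema) : ord (None :: H) = ord H.
Proof. reflexivity. Qed.

Lemma transmission_bounds (pm : R) (Hp : 0 < pm <= / 2) (H : schema) :
  forall u v, length u = length H -> length v = length H ->
  pm ^ ord H <= transmission pm H u v /\
  (matchesb H u = true -> (/ 2) ^ ord H <= transmission pm H u v) /\
  (matchesb H u = true -> matchesb H v = true ->
     (1 - pm) ^ ord H <= transmission pm H u v).
Proof.
  induction H as [|h H IH]; intros [|x u] [|y v] Hu Hv; try discriminate.
  { rewrite transmission_nil; unfold ord; simpl; lra. }
  injection Hu as Hu; injection Hv as Hv.
  destruct (IH u v Hu Hv) as [T3 [T2 T1]].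
  rewrite transmission_cons, !matchesb_cons.
  destruct h as [t|].
  - destruct (coord_transmission_fixed pm t x y Hp) as [C3 [C2 C1]].
    rewrite ord_cons_fixed; cbn [pow].
    assert (0 <= pm ^ ord H) by (apply pow_le; lra).
    assert (0 <= (/ 2) ^ ord H) by (apply pow_le; lra).
    assert (0 <= (1 - pm) ^ ord H) by (apply pow_le; lra).
    repeat split.
    + apply Rmult_le_compat; lra.
    + intros [Fx Mu]%andb_prop; apply Rmult_le_compat; auto; lra.
    + intros [Fx Mu]%andb_prop [Fy Mv]%andb_prop; apply Rmult_le_compat; auto; lra.
  - rewrite coord_transmission_wildcard, ord_cons_wildcard, Rmult_1_l; cbn [fits andb].
    auto.
Qed.

Lemma transmission_case_bound (pm : R) (H : schema) (u v : model) :
  0 < pm <= / 2 -> length u = length H -> length v = length H ->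
  let iu := indicator (matchesb H u) in
  let iv := indicator (matchesb H v) in
  iu * iv * (1 - pm) ^ ord H + iu * (1 - iv) * (/ 2) ^ ord H + (1 - iu) * pm ^ ord H
  <= transmission pm H u v.
Proof.
  intros Hp Hu Hv iu iv; unfold iu, iv, indicator.
  destruct (transmission_bounds pm Hp H u v Hu Hv) as [T3 [T2 T1]].
  destruct (matchesb H u), (matchesb H v);
    [specialize (T1 eq_refl eq_refl) | specialize (T2 eq_refl) | |]; lra.
Qed.

Lemma alpha_mean (pm : R) (f : model -> R) (pop : list model) (H : schema) :
  alpha (length H) pm f pop H =
  mean (seq 0 (length pop)) (sel_weight f pop) (fun k =>
    mean (seq 0 (length pop)) (sel_weight f pop) (fun l =>
      transmission pm H (nth k pop []) (nth l pop []))).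
Proof.
  unfold alpha, mean, transmission, mutation_match; f_equal; apply map_ext; intros k.
  apply sumR_map_scale; intros l.
  set (u := nth k pop []); set (v := nth l pop []).
  rewrite (sumR_map_scale _ _
    (fun m => sumR (map (fun z => mut_prob pm z * indicator (matchesb H (mutate z (crossover m u v))))
                        (all_bits (length H))))
    (sel_weight f pop k * sel_weight f pop l * (/ 2) ^ length H)).
  - ring.
  - intros m; apply sumR_map_scale; intros z; ring.
Qed.

Theorem corollary3p4 (d : nat) (pop : list model) (f : model -> R) (pm : R) (H : schema) :
  (1 <= length pop)%nat ->
  Forall (fun u => length u = d) pop ->
  length H = d ->
  0 < pm <= / 2 ->
  alpha d pm f pop H >=
    (1 - pm) ^ ord H * (alpha_sel f pop H) ^ 2
    + (/ 2) ^ ord H * alpha_sel f pop H * (1 - alpha_sel f pop H)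
    + (1 - alpha_sel f pop H) ^ 2 * pm ^ ord H.
Proof.
  intros Hn Hlen HH Hp; subst d.
  set (idx := seq 0 (length pop)).
  set (w := sel_weight f pop).
  assert (Hw : forall k, 0 <= w k) by (intros k; apply sel_weight_nonneg, Hn).
  assert (Hw1 : sumR (map w idx) = 1) by (apply sel_weight_total, Hn).
  assert (Hlen_idx : forall k, In k idx -> length (nth k pop []) = length H).
  { intros k Hk; apply in_seq in Hk.
    rewrite Forall_forall in Hlen; apply Hlen, nth_In; lia. }
  assert (Ha : 0 <= alpha_sel f pop H <= 1) by (apply alpha_sel_unit_interval, Hn).
  assert (Hbound : alpha (length H) pm f pop H >=
    (1 - pm) ^ ord H * alpha_sel f pop H ^ 2
    + (/ 2) ^ ord H * alpha_sel f pop H * (1 - alpha_sel f pop H)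
    + pm ^ ord H * (1 - alpha_sel f pop H)).
  { rewrite alpha_mean, alpha_sel_mean; fold idx w.
    rewrite <- mean_case_bound by assumption.
    apply Rle_ge, mean_le; auto; intros k Hk.
    apply mean_le; auto; intros l Hl.
    apply transmission_case_bound; auto. }
  assert (0 <= pm ^ ord H) by (apply pow_le; lra).
  assert (pm ^ ord H * (1 - alpha_sel f pop H) ^ 2 <= pm ^ ord H * (1 - alpha_sel f pop H))
    by (apply Rmult_le_compat_l; nra).
  lra.
Qed.
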